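(* Let $t\ge1$, $w\in\mathbb{R}^t_{++}$, $\rho>0$ and $d\in\mathbb{R}^t_{++}$. Let $d^w\in\mathbb{R}^t$ be given by $d^w_i:=d_i/w_i$, and let $\Pi$ be a permutation matrix such that $\Pi d^w$ is sorted in non-increasing order. Put $\tilde d=\Pi d$, $\tilde w=\Pi w$, and for $i=1,\dots,t$, $$s_i=\sum_{j=1}^i\tilde w_j\tilde d_j,\qquad L_i=\sum_{j=1}^i\tilde w_j^2,\qquad \alpha_i=\frac{s_i}{1+2\rho L_i},$$ and let $\bar\alpha=\max_{1\le i\le t}\alpha_i$. Then $$x(d):=\arg\min_{x\in\mathbb{R}^t_+}\Big\{\frac12\|x-d\|^2+\rho\|w\circ x\|_1^2\Big\}=(d-2\rho\bar\alpha w)^+ .$$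
   Context: $\circ$ is the Hadamard product; for a vector $z$, $z^+$ denotes the entrywise positive part $\max\{z_i,0\}$. *)

From HB Require Import structures.
From mathcomp Require Import all_boot all_order all_algebra all_fingroup.
Set Implicit Arguments. Unset Strict Implicit. Unset Printing Implicit Defensive.
Import Order.TTheory GRing.Theory Num.Theory.
Local Open Scope ring_scope.

Definition pospart (R : realFieldType) (t : nat) (z : 'I_t -> R) : 'I_t -> R :=
  fun i => Num.max (z i) 0.

Definition objective (R : realFieldType) (t : nat) (rho : R) (w d x : 'I_t -> R) : R :=
  2^-1 * (\sum_(i < t) (x i - d i) ^+ 2)
  + rho * (\sum_(i < t) `|w i * x i|) ^+ 2.

(* the permuted vectors: (Pi v)_i = v (sigma i) *)
Definition permv (R : Type) (t : nat) (s : 'S_t) (v : 'I_t -> R) : 'I_t -> R :=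
  fun i => v (s i).

(* s_i, L_i, alpha_i (indices i : 'I_t correspond to 1..t via i+1) *)
Definition s_seq (R : realFieldType) (t : nat) (wt dt : 'I_t -> R) (i : 'I_t) : R :=
  \sum_(j < t | (j <= i)%N) wt j * dt j.
Definition L_seq (R : realFieldType) (t : nat) (wt : 'I_t -> R) (i : 'I_t) : R :=
  \sum_(j < t | (j <= i)%N) wt j ^+ 2.
Definition alpha_seq (R : realFieldType) (t : nat) (rho : R) (wt dt : 'I_t -> R)
  (i : 'I_t) : R :=
  s_seq wt dt i / (1 + 2 * rho * L_seq wt i).

Definition maxI (R : realFieldType) (t : nat) (ht : (0 < t)%N) (a : 'I_t -> R) : R :=
  \big[Num.max/a (Ordinal ht)]_(i < t) a i.

(** With [a := 2 rho abar], the candidate is [p = (d - a w)^+].  Because the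
    ratios [d_i / w_i] are sorted, the support of [p] is a prefix of the sorted
    indices, so [<w, p>] is a prefix sum [s_m - a L_m], which is [<= abar]
    exactly when [alpha_m <= abar]; at a maximising index equality holds.
    Hence [<w, p> = abar], i.e. [p = (d - 2 rho <w, p> w)^+] is a fixed point of
    the projected gradient step.  On the nonnegative orthant the objective is
    the quadratic [1/2 |x - d|^2 + rho <w, x>^2], whose expansion around such a
    fixed point has a nonnegative first-order term, which gives
    [f p + 1/2 |x - p|^2 <= f x]: minimality and uniqueness at once. *)
From Stdlib Require Import FunctionalExtensionality.
From mathcomp Require Import all_boot all_order all_algebra all_fingroup.
From mathcomp Require Import ring.

Set Implicit Arguments.
Unset Strict Implicit.
Unset Printing Implicit Defensive.
Import Order.TTheory GRing.Theory Num.Theory.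
Local Open Scope ring_scope.

Lemma maxI_attained (R : realFieldType) (t : nat) (ht : (0 < t)%N) (a : 'I_t -> R) :
  exists k, maxI ht a = a k.
Proof.
rewrite /maxI; case: (@arg_maxP _ _ _ (Ordinal ht) xpredT a isT) => k _ hk.
exists k; apply/le_anti; rewrite le_bigmax andbT; apply/bigmax_leP; split=> //.
exact: hk.
Qed.

Section WeightedPospartSum.

Variables (R : realFieldType) (t : nat) (w c : 'I_t -> R).
Hypothesis w_ge0 : forall j, 0 <= w j.

Lemma sum_le_sum_pospart (P : pred 'I_t) :
  \sum_(j | P j) w j * c j <= \sum_j w j * Num.max (c j) 0.
Proof.
rewrite [X in _ <= X](bigID P) /= -[X in X <= _]addr0; apply: lerD.
  by apply: ler_sum => j _; rewrite ler_wpM2l // le_max lexx.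
by apply: sumr_ge0 => j _; rewrite mulr_ge0 // le_max lexx orbT.
Qed.

Hypothesis pos_prefix_closed :
  forall i j : 'I_t, (j <= i)%N -> 0 < c i -> 0 < c j.

Lemma sum_pospart_le (B : R) : 0 <= B ->
  (forall i : 'I_t, \sum_(j < t | (j <= i)%N) w j * c j <= B) ->
  \sum_j w j * Num.max (c j) 0 <= B.
Proof.
move=> B_ge0 prefix_le.
case: (pickP (fun j => 0 < c j)) => [j0 c_j0_gt0 | c_le0]; last first.
  by rewrite big1 // => j _; rewrite max_r ?mulr0 // leNgt c_le0.
(* [m] is the last index with [0 < c m]; by prefix-closedness the support of
   [c^+] is exactly [{j | j <= m}]. *)
case: (@arg_maxnP _ j0 (fun j => 0 < c j) (@nat_of_ord t) c_j0_gt0).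
move=> m c_m_gt0 m_max.
rewrite (eq_bigr (fun j : 'I_t => if (j <= m)%N then w j * c j else 0)).
  by rewrite -big_mkcond.
move=> j _; case: ifP => [le_jm | /negbT].
  by rewrite max_l // ltW // (pos_prefix_closed le_jm c_m_gt0).
rewrite -ltnNge => lt_mj; rewrite max_r ?mulr0 // leNgt; apply/negP => /m_max.
by rewrite /= leqNgt lt_mj.
Qed.

End WeightedPospartSum.

Section SortedRatios.

Variables (R : realFieldType) (t : nat) (ht : (0 < t)%N) (rho : R) (wt dt : 'I_t -> R).
Hypothesis rho_ge0 : 0 <= rho.
Hypothesis wt_gt0 : forall j, 0 < wt j.
Hypothesis dt_ge0 : forall j, 0 <= dt j.
Hypothesis ratio_sorted :
  forall i j : 'I_t, (i <= j)%N -> dt j / wt j <= dt i / wt i.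

Lemma prefix_sum_shift (a : R) (i : 'I_t) :
  \sum_(j < t | (j <= i)%N) wt j * (dt j - a * wt j) = s_seq wt dt i - a * L_seq wt i.
Proof.
by rewrite /s_seq /L_seq mulr_sumr -sumrB; apply: eq_bigr => j _; ring.
Qed.

Lemma alpha_denom_gt0 (i : 'I_t) : 0 < 1 + 2 * rho * L_seq wt i.
Proof.
have L_ge0 : 0 <= L_seq wt i by apply: sumr_ge0 => j _; apply: sqr_ge0.
by apply: ltr_wpDr; rewrite ?ltr01 // !mulr_ge0.
Qed.

Lemma alpha_le (A : R) (i : 'I_t) :
  (alpha_seq rho wt dt i <= A) = (s_seq wt dt i - 2 * rho * A * L_seq wt i <= A).
Proof.
rewrite /alpha_seq ler_pdivrMr ?alpha_denom_gt0 // lerBlDr.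
by congr (_ <= _); ring.
Qed.

Lemma shifted_pos_prefix_closed (a : R) (i j : 'I_t) :
  (j <= i)%N -> 0 < dt i - a * wt i -> 0 < dt j - a * wt j.
Proof.
rewrite !subr_gt0 -!ltr_pdivlMr // => le_ji lt_a_i.
exact: lt_le_trans lt_a_i (ratio_sorted le_ji).
Qed.

Lemma sum_pospart_maxI :
  let A := maxI ht (alpha_seq rho wt dt) in
  \sum_j wt j * Num.max (dt j - 2 * rho * A * wt j) 0 = A.
Proof.
move=> A; have [k Ak] : exists k, A = alpha_seq rho wt dt k := maxI_attained _ _.
have wt_ge0 j : 0 <= wt j by apply: ltW.
have alpha_le_A i : alpha_seq rho wt dt i <= A by apply: le_bigmax.
have A_ge0 : 0 <= A.
  rewrite Ak /alpha_seq divr_ge0 ?(ltW (alpha_denom_gt0 k)) //.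
  by apply: sumr_ge0 => j _; apply: mulr_ge0.
apply/le_anti/andP; split.
  apply: sum_pospart_le => // [i j|i]; first exact: shifted_pos_prefix_closed.
  by rewrite prefix_sum_shift -alpha_le.
have prefix_k : s_seq wt dt k - 2 * rho * A * L_seq wt k = A.
  have s_k : s_seq wt dt k = A * (1 + 2 * rho * L_seq wt k).
    by rewrite Ak /alpha_seq divfK // lt0r_neq0 // alpha_denom_gt0.
  by rewrite s_k; ring.
rewrite -[X in X <= _]prefix_k -prefix_sum_shift.
exact: sum_le_sum_pospart.
Qed.

End SortedRatios.

Section Optimality.

Variables (R : realFieldType) (t : nat) (rho : R) (w d : 'I_t -> R).
Hypothesis rho_ge0 : 0 <= rho.
Hypothesis w_ge0 : forall i, 0 <= w i.

Lemma objectiveE (x : 'I_t -> R) : (forall i, 0 <= x i) ->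
  objective rho w d x
  = 2^-1 * (\sum_i (x i - d i) ^+ 2) + rho * (\sum_i w i * x i) ^+ 2.
Proof.
move=> x_ge0; rewrite /objective; congr (_ + rho * _ ^+ 2).
by apply: eq_bigr => i _; rewrite ger0_norm // mulr_ge0.
Qed.

Lemma objective_expansion (x p : 'I_t -> R) :
  (forall i, 0 <= x i) -> (forall i, 0 <= p i) ->
  objective rho w d x
  = objective rho w d p
    + \sum_i (p i - d i + 2 * rho * (\sum_j w j * p j) * w i) * (x i - p i)
    + 2^-1 * (\sum_i (x i - p i) ^+ 2)
    + rho * (\sum_i w i * (x i - p i)) ^+ 2.
Proof.
move=> x_ge0 p_ge0; rewrite !objectiveE //.
set S := \sum_j w j * p j; set V := \sum_i w i * (x i - p i).
set U := \sum_i (p i - d i) * (x i - p i); set Q := \sum_i (x i - p i) ^+ 2.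
have wx : \sum_i w i * x i = S + V.
  by rewrite /S /V -big_split /=; apply: eq_bigr => i _; ring.
have sq : \sum_i (x i - d i) ^+ 2 = \sum_i (p i - d i) ^+ 2 + 2 * U + Q.
  rewrite /U /Q mulr_sumr -!big_split /=; apply: eq_bigr => i _; ring.
have grad : \sum_i (p i - d i + 2 * rho * S * w i) * (x i - p i)
            = U + 2 * rho * S * V.
  rewrite /U /V mulr_sumr -big_split /=; apply: eq_bigr => i _; ring.
by rewrite wx sq grad; field.
Qed.

Lemma pospart_variational (c x : R) : 0 <= x ->
  0 <= (Num.max c 0 - c) * (x - Num.max c 0).
Proof.
move=> x_ge0; case: (leP 0 c) => [_ | c_lt0]; first by rewrite subrr mul0r.
by rewrite sub0r subr0 mulr_ge0 // oppr_ge0 ltW.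
Qed.

Lemma fixpoint_quadratic_growth (p x : 'I_t -> R) :
  (forall i, p i = Num.max (d i - 2 * rho * (\sum_j w j * p j) * w i) 0) ->
  (forall i, 0 <= x i) ->
  objective rho w d p + 2^-1 * (\sum_i (x i - p i) ^+ 2) <= objective rho w d x.
Proof.
move=> p_fix x_ge0.
have p_ge0 i : 0 <= p i by rewrite p_fix le_max lexx orbT.
rewrite (objective_expansion x_ge0 p_ge0) -!addrA !lerD2l addrCA lerDl.
rewrite addr_ge0 //; last by rewrite mulr_ge0 // sqr_ge0.
apply: sumr_ge0 => i _; set S := \sum_j w j * p j.
have -> : p i - d i + 2 * rho * S * w i = p i - (d i - 2 * rho * S * w i) by ring.
by rewrite [p i]p_fix pospart_variational.
Qed.

End Optimality.

Lemma sum_sqr_le0_eq (R : realFieldType) (t : nat) (x p : 'I_t -> R) :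
  \sum_i (x i - p i) ^+ 2 <= 0 -> x = p.
Proof.
move=> Q_le0; apply: functional_extensionality => i.
have Q_eq0 : \sum_i (x i - p i) ^+ 2 = 0.
  by apply/le_anti; rewrite Q_le0 sumr_ge0 // => j _; apply: sqr_ge0.
have := @psumr_eq0P _ _ _ _ (fun j _ => sqr_ge0 (x j - p j)) Q_eq0 i isT.
by move/eqP; rewrite sqrf_eq0 subr_eq0 => /eqP.
Qed.

Theorem proposition3p3 (R : realFieldType) (t : nat) (ht : (0 < t)%N)
  (w : 'I_t -> R) (hw : forall i, 0 < w i) (rho : R) (hrho : 0 < rho)
  (d : 'I_t -> R) (hd : forall i, 0 < d i) (sigma : 'S_t)
  (hsort : forall i j : 'I_t, (i <= j)%N ->
     d (sigma j) / w (sigma j) <= d (sigma i) / w (sigma i)) :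
  let dt := permv sigma d in
  let wt := permv sigma w in
  let abar := maxI ht (alpha_seq rho wt dt) in
  let p := pospart (fun i => d i - 2 * rho * abar * w i) in
  (forall i, 0 <= p i) /\
  (forall x : 'I_t -> R, (forall i, 0 <= x i) ->
     objective rho w d p <= objective rho w d x) /\
  (forall x : 'I_t -> R, (forall i, 0 <= x i) ->
     objective rho w d x <= objective rho w d p -> x = p).
Proof.
move=> dt wt abar p.
have w_ge0 i : 0 <= w i by apply: ltW.
have wp_eq_abar : \sum_j w j * p j = abar.
  rewrite (reindex_inj (@perm_inj _ sigma)).
  exact: (sum_pospart_maxI ht (ltW hrho) (fun j => hw (sigma j))
            (fun j => ltW (hd (sigma j))) hsort).
have p_fix i : p i = Num.max (d i - 2 * rho * (\sum_j w j * p j) * w i) 0.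
  by rewrite wp_eq_abar.
have growth := fixpoint_quadratic_growth (ltW hrho) w_ge0 p_fix.
split; first by move=> i; rewrite le_max lexx orbT.
split=> x x_ge0.
- apply: le_trans (growth x x_ge0); rewrite lerDl mulr_ge0 ?invr_ge0 //.
  by apply: sumr_ge0 => i _; apply: sqr_ge0.
- move=> le_xp; apply: sum_sqr_le0_eq.
  have := le_trans (growth x x_ge0) le_xp.
  by rewrite gerDl pmulr_rle0 // invr_gt0 ltr0n.
Qed.
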